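(* Not all FO-definable transformations are SRT-definable: there exist a linear group $\mathbf{G}$, finite label sets $\Sigma,\Gamma$ and an sMSO $\mathcal{M}=(\Sigma,\Gamma,\mathbf{G},\phi)$ with $\phi$ a first-order sentence such that $[\![\mathcal{M}]\!]\neq[\![\mathcal{S}]\!]$ for every $(\Sigma,\Gamma,\mathbf{G})$-SRT $\mathcal{S}$.
   Context: A linear group is a triple $\mathbf{G}=(D,\leq,+)$ where $D$ is an infinite set, $\leq$ is a total order on $D$, and $(D,+)$ is a group with identity $0$. For finite label sets $\Sigma,\Gamma$, a $(\Sigma,\Gamma,\mathbf{G})$-SRT is a tuple $\mathcal{S}=(Q,q_0,k,R_0,\Delta)$: $Q$ finite set of states, $q_0\in Q$, $k\in\mathbb{N}$ registers, initial values $R_0\in D^k$, transitions $\Delta\subseteq Q\times\Sigma\times\{>,=,<\}^k\times\{\mathsf{old},\mathsf{new},\mathsf{add}\}^k\times\{1,\dots,k\}\times\Gamma\times Q$. A transition $(q,\sigma,l,m,u,\gamma,q')$ enables the step $(q,R)\xrightarrow[(\gamma,d')]{(\sigma,d)}(q',R')$ iff (1) for every $i$, $d>R[i]$, $d=R[i]$ or $d<R[i]$ according as $l[i]$ is $>$, $=$, $<$; (2) $R'[i]=R[i]$, $d$, or $R[i]+d$ according as $m[i]$ is $\mathsf{old}$, $\mathsf{new}$, $\mathsf{add}$; (3) $d'=R'[u]$. A run over $s\in(\Sigma\times D)^*$ of length $n$ generating $t\in(\Gamma\times D)^*$ is a sequence of $n$ enabled steps from $(q_0,R_0)$ reading $s[i]$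 and emitting $t[i]$. $s\otimes t$ is the word with $i$-th letter $(s[i],t[i])$; $[\![\mathcal{S}]\!]=\{s\otimes t:\text{there is a run over }s\text{ generating }t\}$. The logic $\mathsf{MSO}(\Sigma,\Gamma,\mathbf{G})$ is interpreted over finite words $V$ over $(\Sigma\times D)\times(\Gamma\times D)$. It has first-order position variables and second-order variables over sets of positions; atomic formulae $x=y$, $x\in X$, $L_\sigma(x)$ (input label at $x$ is $\sigma$), $L_\gamma(x)$ (output label at $x$ is $\gamma$), $S(x,y)$ ($y=x+1$), and $E\leq 0$ where $E$ is built with $+,-$ from $dt_{in}(x)$, $dt_{out}(x)$ (input/output data value at $x$), $sum\_dt_{in}(X)$, $sum\_dt_{out}(X)$ (sums of input/output data values over $X$) and $0$; closed under boolean connectives and first/second-order quantifiers. A first-order formula is one with no set variables. An sMSO is $\mathcal{M}=(\Sigma,\Gamma,\mathbf{G},\phi)$ with $\phi$ a sentence of this logic, and $[\![\mathcal{M}]\!]=\{V: V[0..i]\models\phi\text{ for every }i\}$, $V[0..i]$ denoting the prefix on positions $0,\dots,i$. A transformation is FO-definable if it equals $[\![\mathcal{M}]\!]$ for an sMSO whose sentence is first-order. *)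

From mathcomp Require Import all_boot.
Set Implicit Arguments.
Unset Strict Implicit.
Unset Printing Implicit Defensive.

(* A linear group (D, <=, +): D infinite, <= a total order, (D,+) a group
   (not assumed commutative; no compatibility between order and group). *)
Record linear_group := LinearGroup {
  lg_D : Type;
  lg_le : lg_D -> lg_D -> Prop;
  lg_add : lg_D -> lg_D -> lg_D;
  lg_zero : lg_D;
  lg_opp : lg_D -> lg_D;
  lg_infinite : exists f : nat -> lg_D, forall m n, f m = f n -> m = n;
  lg_le_refl : forall x, lg_le x x;
  lg_le_antisym : forall x y, lg_le x y -> lg_le y x -> x = y;
  lg_le_trans : forall x y z, lg_le x y -> lg_le y z -> lg_le x z;
  lg_le_total : forall x y, lg_le x y \/ lg_le y x;
  lg_addA : forall x y z, lg_add x (lg_add y z) = lg_add (lg_add x y) z;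
  lg_add0l : forall x, lg_add lg_zero x = x;
  lg_addr0 : forall x, lg_add x lg_zero = x;
  lg_addNl : forall x, lg_add (lg_opp x) x = lg_zero;
  lg_addrN : forall x, lg_add x (lg_opp x) = lg_zero
}.

Definition lg_lt (G : linear_group) (x y : lg_D G) : Prop :=
  lg_le x y /\ x <> y.

Inductive cmp := CGt | CEq | CLt.
Inductive upd := UOld | UNew | UAdd.

Section SRTdef.
Variables (Sigma Gamma : finType) (G : linear_group).

Local Notation D := (lg_D G).

(* registers indexed by 'I_k (i.e. {1,...,k}); Delta is an arbitrary subset
   of the (finite) set Q x Sigma x cmp^k x upd^k x 'I_k x Gamma x Q *)
Record SRT := MkSRT {
  srt_Q : finType;
  srt_q0 : srt_Q;
  srt_k : nat;
  srt_R0 : 'I_srt_k -> D;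
  srt_Delta : srt_Q -> Sigma -> ('I_srt_k -> cmp) -> ('I_srt_k -> upd) ->
              'I_srt_k -> Gamma -> srt_Q -> Prop
}.

Definition cmp_holds (c : cmp) (d r : D) : Prop :=
  match c with
  | CGt => lg_lt r d
  | CEq => d = r
  | CLt => lg_lt d r
  end.

Definition upd_val (m : upd) (r d : D) : D :=
  match m with
  | UOld => r
  | UNew => d
  | UAdd => lg_add r d
  end.

Definition srt_step (S : SRT) (q : srt_Q S) (R : 'I_(srt_k S) -> D)
    (sig : Sigma) (d : D) (gam : Gamma) (d' : D)
    (q' : srt_Q S) (R' : 'I_(srt_k S) -> D) : Prop :=
  exists (l : 'I_(srt_k S) -> cmp) (m : 'I_(srt_k S) -> upd) (u : 'I_(srt_k S)),
    srt_Delta q sig l m u gam q' /\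
    (forall i, cmp_holds (l i) d (R i)) /\
    (forall i, R' i = upd_val (m i) (R i) d) /\
    d' = R' u.

Fixpoint srt_run_from (S : SRT) (q : srt_Q S) (R : 'I_(srt_k S) -> D)
    (V : seq ((Sigma * D) * (Gamma * D))) : Prop :=
  match V with
  | [::] => True
  | a :: V' => exists (q' : srt_Q S) (R' : 'I_(srt_k S) -> D),
      srt_step q R a.1.1 a.1.2 a.2.1 a.2.2 q' R' /\ srt_run_from q' R' V'
  end.

Definition srt_sem (S : SRT) (V : seq ((Sigma * D) * (Gamma * D))) : Prop :=
  srt_run_from (@srt_q0 S) (@srt_R0 S) V.

End SRTdef.

(* first-order variables and second-order variables are both named by nat,
   in separate namespaces *)
Inductive mterm :=
  | TIn of nat
  | TOut of nat
  | TSumIn of nat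
  | TSumOut of nat
  | TZero
  | TAdd of mterm & mterm
  | TSub of mterm & mterm.

Section Logic.
Variables (Sigma Gamma : finType).

Inductive mformula :=
  | FEq of nat & nat
  | FMem of nat & nat
  | FLin of Sigma & nat
  | FLout of Gamma & nat
  | FSucc of nat & nat
  | FLe0 of mterm
  | FNot of mformula
  | FAnd of mformula & mformula
  | FOr of mformula & mformula
  | FEx1 of nat & mformula
  | FAll1 of nat & mformula
  | FEx2 of nat & mformula
  | FAll2 of nat & mformula.

Fixpoint term_scoped (b1 b2 : seq nat) (e : mterm) : bool :=
  match e with
  | TIn x | TOut x => x \in b1
  | TSumIn X | TSumOut X => X \in b2
  | TZero => true
  | TAdd e1 e2 | TSub e1 e2 => term_scoped b1 b2 e1 && term_scoped b1 b2 e2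
  end.

Fixpoint scoped (b1 b2 : seq nat) (f : mformula) : bool :=
  match f with
  | FEq x y | FSucc x y => (x \in b1) && (y \in b1)
  | FMem x X => (x \in b1) && (X \in b2)
  | FLin _ x | FLout _ x => x \in b1
  | FLe0 e => term_scoped b1 b2 e
  | FNot f1 => scoped b1 b2 f1
  | FAnd f1 f2 | FOr f1 f2 => scoped b1 b2 f1 && scoped b1 b2 f2
  | FEx1 x f1 | FAll1 x f1 => scoped (x :: b1) b2 f1
  | FEx2 X f1 | FAll2 X f1 => scoped b1 (X :: b2) f1
  end.

Definition is_sentence (f : mformula) : bool := scoped [::] [::] f.

Fixpoint term_FO (e : mterm) : bool :=
  match e with
  | TIn _ | TOut _ | TZero => true
  | TSumIn _ | TSumOut _ => false
  | TAdd e1 e2 | TSub e1 e2 => term_FO e1 && term_FO e2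
  end.

Fixpoint is_FO (f : mformula) : bool :=
  match f with
  | FEq _ _ | FLin _ _ | FLout _ _ | FSucc _ _ => true
  | FMem _ _ => false
  | FLe0 e => term_FO e
  | FNot f1 => is_FO f1
  | FAnd f1 f2 | FOr f1 f2 => is_FO f1 && is_FO f2
  | FEx1 _ f1 | FAll1 _ f1 => is_FO f1
  | FEx2 _ _ | FAll2 _ _ => false
  end.

Variable G : linear_group.
Local Notation D := (lg_D G).
Local Notation word := (seq ((Sigma * D) * (Gamma * D))).

Section Sem.
Variable W : word.

Definition dt_in (p : nat) : D := nth (lg_zero G) [seq a.1.2 | a <- W] p.
Definition dt_out (p : nat) : D := nth (lg_zero G) [seq a.2.2 | a <- W] p.

(* sums over the positions of X (in increasing order of positions) *)
Definition sum_over (f : nat -> D) (X : nat -> bool) : D :=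
  foldl (fun acc p => lg_add acc (f p)) (lg_zero G)
        [seq p <- iota 0 (size W) | X p].

Fixpoint eval_term (nu1 : nat -> nat) (nu2 : nat -> nat -> bool) (e : mterm) : D :=
  match e with
  | TIn x => dt_in (nu1 x)
  | TOut x => dt_out (nu1 x)
  | TSumIn X => sum_over dt_in (nu2 X)
  | TSumOut X => sum_over dt_out (nu2 X)
  | TZero => lg_zero G
  | TAdd e1 e2 => lg_add (eval_term nu1 nu2 e1) (eval_term nu1 nu2 e2)
  | TSub e1 e2 => lg_add (eval_term nu1 nu2 e1) (lg_opp (eval_term nu1 nu2 e2))
  end.

Definition upd1 (nu : nat -> nat) (x p : nat) : nat -> nat :=
  fun y => if y == x then p else nu y.
Definition upd2 (nu : nat -> nat -> bool) (X : nat) (P : nat -> bool) :=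
  fun Y => if Y == X then P else nu Y.

Fixpoint sat (nu1 : nat -> nat) (nu2 : nat -> nat -> bool) (f : mformula) : Prop :=
  match f with
  | FEq x y => nu1 x = nu1 y
  | FMem x X => nu2 X (nu1 x) = true
  | FLin s x => exists a, onth W (nu1 x) = Some a /\ a.1.1 = s
  | FLout g x => exists a, onth W (nu1 x) = Some a /\ a.2.1 = g
  | FSucc x y => nu1 y = (nu1 x).+1
  | FLe0 e => lg_le (eval_term nu1 nu2 e) (lg_zero G)
  | FNot f1 => ~ sat nu1 nu2 f1
  | FAnd f1 f2 => sat nu1 nu2 f1 /\ sat nu1 nu2 f2
  | FOr f1 f2 => sat nu1 nu2 f1 \/ sat nu1 nu2 f2
  | FEx1 x f1 => exists p, p < size W /\ sat (upd1 nu1 x p) nu2 f1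
  | FAll1 x f1 => forall p, p < size W -> sat (upd1 nu1 x p) nu2 f1
  (* set quantifiers: only membership of positions 0..size W - 1 matters *)
  | FEx2 X f1 => exists P : nat -> bool, sat nu1 (upd2 nu2 X P) f1
  | FAll2 X f1 => forall P : nat -> bool, sat nu1 (upd2 nu2 X P) f1
  end.
End Sem.

Definition models (W : word) (phi : mformula) : Prop :=
  sat W (fun _ => 0) (fun _ _ => false) phi.

Definition smso_sem (phi : mformula) (V : word) : Prop :=
  forall i, i < size V -> models (take i.+1 V) phi.

End Logic.

(* The sentence [forall x, x = x] defines the universal transformation, which
   pairs every input word with every output word of the same length.  An SRT
   cannot realise it: the data value it emits on the first letter is a register
   after the update, so once the first input value [d] is fixed it is one of
   the finitely many values [R0[i]], [d], [R0[i] + d].  As [D] is infinite,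
   some output value is never emitted. *)

From HB Require Import structures.
From mathcomp Require Import all_boot all_order all_algebra.
From Stdlib Require List FinFun Classical_Prop.
Import Order.TTheory GRing.Theory.

Set Implicit Arguments.
Unset Strict Implicit.
Unset Printing Implicit Defensive.

Definition int_linear_group : linear_group.
Proof.
refine (@LinearGroup int (fun x y => x <= y)%R +%R 0%R (fun x => - x)%R
  _ _ _ _ _ _ _ _ _ _).
- by exists Posz => m n [].
- exact: lexx.
- by move=> x y xy yx; apply/le_anti/andP.
- by move=> x y z; apply: le_trans.
- by move=> x y; apply/orP/le_total.
- exact: addrA.
- exact: add0r.
- exact: addr0.
- exact: addNr.
- exact: subrr.
Defined.

Definition upd_code (m : upd) : option bool :=
  match m with UOld => None | UNew => Some false | UAdd => Some true end.

Definition code_upd (c : option bool) : upd :=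
  match c with None => UOld | Some false => UNew | Some true => UAdd end.

Lemma upd_codeK : cancel upd_code code_upd. Proof. by case. Qed.

HB.instance Definition _ := Finite.copy upd (can_type upd_codeK).

Lemma In_of_mem (T : eqType) (x : T) (s : seq T) : x \in s -> List.In x s.
Proof.
elim: s => //= y s IHs; rewrite in_cons => /orP[/eqP ->|x_s]; first by left.
by right; apply: IHs.
Qed.

Lemma infinite_not_list (T : Type) (f : nat -> T) (s : list T) :
  injective f -> exists x : T, ~ List.In x s.
Proof.
move=> f_inj; apply: Classical_Prop.NNPP => s_full.
have s_covers : List.incl (List.map f (List.seq 0 (size s).+1)) s.
  move=> x _; apply: Classical_Prop.NNPP => x_notin_s.
  by apply: s_full; exists x.
have := List.NoDup_incl_length
  (FinFun.Injective_map_NoDup f_inj (List.seq_NoDup _ _)) s_covers.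
rewrite List.length_map List.length_seq; exact: PeanoNat.Nat.nle_succ_diag_l.
Qed.

Lemma infinite_not_finite_image (A : finType) (T : Type) (f : nat -> T)
    (g : A -> T) :
  injective f -> exists x : T, forall a, g a <> x.
Proof.
move=> f_inj; have [x x_notin_img] := infinite_not_list (List.map g (enum A)) f_inj.
exists x => a gax; apply: x_notin_img; rewrite -gax.
by apply/List.in_map/In_of_mem; rewrite mem_enum.
Qed.

Definition trivial_sentence {Sigma Gamma : finType} : mformula Sigma Gamma :=
  FAll1 0 (FEq Sigma Gamma 0 0).

Lemma smso_sem_trivial (Sigma Gamma : finType) (G : linear_group)
    (V : seq ((Sigma * lg_D G) * (Gamma * lg_D G))) :
  smso_sem trivial_sentence V.
Proof. by []. Qed.

Section FirstOutput.
Variables (Sigma Gamma : finType) (G : linear_group) (S : SRT Sigma Gamma G).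

Lemma srt_sem_first_output sig d gam d' V :
  srt_sem S (((sig, d), (gam, d')) :: V) ->
  exists im : 'I_(srt_k S) * upd, d' = upd_val im.2 (srt_R0 im.1) d.
Proof.
case=> _ [R' [[_ [m [u [_ [_ [R'E /= ->]]]]]] _]].
by exists (u, m u); rewrite R'E.
Qed.

Lemma srt_sem_unreachable_output sig d gam :
  exists d', ~ srt_sem S [:: ((sig, d), (gam, d'))].
Proof.
have [f f_inj] := lg_infinite G.
have [d' d'_unreached] := infinite_not_finite_image
  (fun im : 'I_(srt_k S) * upd => upd_val im.2 (srt_R0 im.1) d) f_inj.
exists d' => /srt_sem_first_output[im d'E].
exact: d'_unreached im (esym d'E).
Qed.

End FirstOutput.

Theorem theorem4p3 :
  exists (G : linear_group) (Sigma Gamma : finType) (phi : mformula Sigma Gamma),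
    is_FO phi /\ is_sentence phi /\
    forall S : SRT Sigma Gamma G,
      ~ (forall V : seq ((Sigma * lg_D G) * (Gamma * lg_D G)),
           @smso_sem Sigma Gamma G phi V <-> srt_sem S V).
Proof.
exists int_linear_group, unit, unit, trivial_sentence.
split=> //; split=> // S S_defines_phi.
have [d' not_emitted] := srt_sem_unreachable_output S tt (0%R : int) tt.
by apply/not_emitted/S_defines_phi/smso_sem_trivial.
Qed.
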